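(* For all integers $s,t \ge 3$, every doubly saturated $R(s,t)$-good graph has at least $2s+2t-7$ vertices. Equivalently, $\mathsf{DS}(s,t) \ge 2s+2t-7$, where $\mathsf{DS}(s,t) := \inf\{n \mid \text{there is a doubly saturated } R(s,t)\text{-good graph on } n \text{ vertices}\}$ (with $\inf \emptyset = \infty$).
   Context: All graphs are finite and simple. A graph $G$ is \emph{$R(s,t)$-good} if it contains no clique of size $s$ and no independent set of size $t$. A graph $G$ is \emph{doubly saturated $R(s,t)$-good} if (i) $G$ is $R(s,t)$-good; (ii) for every pair of non-adjacent distinct vertices $u,v$, the graph $G + uv$ is not $R(s,t)$-good; (iii) for every edge $uv$ of $G$, the graph $G - uv$ is not $R(s,t)$-good; and (iv) $G$ is neither a complete graph nor an edgeless graph. *)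

From mathcomp Require Import all_boot.
Set Implicit Arguments. Unset Strict Implicit. Unset Printing Implicit Defensive.

Definition simple_graph (T : finType) (e : rel T) : Prop :=
  symmetric e /\ irreflexive e.

Definition is_clique (T : finType) (e : rel T) (A : {set T}) : bool :=
  [forall x in A, forall y in A, (x != y) ==> e x y].

Definition is_indep (T : finType) (e : rel T) (A : {set T}) : bool :=
  [forall x in A, forall y in A, ~~ e x y].

Definition rgood (T : finType) (e : rel T) (s t : nat) : Prop :=
  (forall A : {set T}, #|A| = s -> ~~ is_clique e A) /\
  (forall A : {set T}, #|A| = t -> ~~ is_indep e A).

Definition add_edge (T : finType) (e : rel T) (u v : T) : rel T :=
  fun x y => e x y || ((x == u) && (y == v)) || ((x == v) && (y == u)).
Definition del_edge (T : finType) (e : rel T) (u v : T) : rel T :=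
  fun x y => e x y && ~~ (((x == u) && (y == v)) || ((x == v) && (y == u))).

Definition is_complete (T : finType) (e : rel T) : Prop :=
  forall x y : T, x != y -> e x y.
Definition is_edgeless (T : finType) (e : rel T) : Prop :=
  forall x y : T, ~~ e x y.

Definition doubly_saturated (T : finType) (e : rel T) (s t : nat) : Prop :=
  [/\ rgood e s t,
      (forall u v : T, u != v -> ~~ e u v -> ~ rgood (add_edge e u v) s t),
      (forall u v : T, e u v -> ~ rgood (del_edge e u v) s t)
    & ~ is_complete e /\ ~ is_edgeless e].

From mathcomp Require Import all_boot zify.

(* Take a vertex v with both a neighbour and a non-neighbour; it exists since
   the graph is neither complete nor edgeless.  Saturation under adding an
   edge puts an (s-2)-clique in the common neighbourhood of any two
   non-adjacent vertices; saturation under deleting an edge puts a common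
   non-neighbour next to any two adjacent vertices.  So the (s-2)-cliques of
   N(v) are maximum cliques of N(v), and each x in N(v) is missed by one of
   them: choose b adjacent to neither v nor x and take the clique inside
   N(v) and N(b).  Hajnal's lemma (the union and the intersection of a family
   of maximum cliques have total size at least twice the clique number) then
   gives |N(v)| >= 2(s-2).  The complement of a doubly saturated R(s,t)-good
   graph is doubly saturated R(t,s)-good, so v also has at least 2(t-2)
   non-neighbours, and counting v itself gives 2s+2t-7 vertices. *)

Set Implicit Arguments. Unset Strict Implicit. Unset Printing Implicit Defensive.

Section DoublySaturated.
Variable T : finType.
Implicit Types (e r : rel T) (A B C D E I U X : {set T}).
Implicit Types (u v w x y : T) (s t k : nat).

Lemma subset_of_card k B :
  k <= #|B| -> exists2 A : {set T}, A \subset B & #|A| = k.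
Proof.
rewrite -bin_gt0 -cards_draws => /card_gt0P [A].
by rewrite inE => /andP [sAB /eqP cardA]; exists A.
Qed.

Lemma cliqueP r A :
  reflect {in A &, forall x y, x != y -> r x y} (is_clique r A).
Proof.
apply: (iffP forall_inP) => [clA x y xA yA | clA x xA].
  by move/forall_inP: (clA x xA) => /(_ y yA) /implyP.
by apply/forall_inP => y yA; apply/implyP; exact: clA.
Qed.

Lemma indepP r A : reflect {in A &, forall x y, ~~ r x y} (is_indep r A).
Proof.
apply: (iffP forall_inP) => [inA x y xA | inA x xA].
  by move/forall_inP: (inA x xA); apply.
by apply/forall_inP => y; exact: inA.
Qed.

Lemma subset_clique r A B : A \subset B -> is_clique r B -> is_clique r A.
Proof.
move=> /subsetP sAB /cliqueP clB; apply/cliqueP => x y /sAB xB /sAB yB.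
exact: clB.
Qed.

Lemma clique_setU1 e v X : symmetric e -> {in X, forall y, e v y} ->
  is_clique e X -> is_clique e (v |: X).
Proof.
move=> sym vX /cliqueP clX; apply/cliqueP => x y.
rewrite !inE => /predU1P [->|xX] /predU1P [->|yX]; rewrite ?eqxx // => xy.
- exact: vX.
- by rewrite sym; apply: vX.
- exact: clX.
Qed.

Lemma eq_is_clique r r' : r =2 r' -> is_clique r =1 is_clique r'.
Proof.
move=> eqr A; apply/cliqueP/cliqueP => clA x y xA yA xy.
  by rewrite -eqr; apply: clA.
by rewrite eqr; apply: clA.
Qed.

Lemma eq_is_indep r r' : r =2 r' -> is_indep r =1 is_indep r'.
Proof.
move=> eqr A; apply/indepP/indepP => inA x y xA yA.
  by rewrite -eqr; apply: inA.
by rewrite eqr; apply: inA.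
Qed.

Lemma eq_rgood r r' s t : r =2 r' -> rgood r s t <-> rgood r' s t.
Proof.
move=> eqr; rewrite /rgood.
split=> -[noK noI]; split=> A cardA.
- by rewrite -(eq_is_clique eqr); apply: noK.
- by rewrite -(eq_is_indep eqr); apply: noI.
- by rewrite (eq_is_clique eqr); apply: noK.
- by rewrite (eq_is_indep eqr); apply: noI.
Qed.

Lemma rgood_clique_lt e s t A : rgood e s t -> is_clique e A -> #|A| < s.
Proof.
move=> [noK _] clA; rewrite ltnNge; apply/negP => /subset_of_card [B sBA cardB].
by case/negP: (noK B cardB); exact: subset_clique clA.
Qed.

Lemma not_rgood e s t : ~ rgood e s t ->
  (exists2 A : {set T}, #|A| = s & is_clique e A) \/
  (exists2 A : {set T}, #|A| = t & is_indep e A).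
Proof.
move=> bad.
case: (boolP [exists A : {set T}, (#|A| == s) && is_clique e A]).
  by case/existsP => A /andP [/eqP cardA clA]; left; exists A.
case: (boolP [exists A : {set T}, (#|A| == t) && is_indep e A]).
  by case/existsP => A /andP [/eqP cardA inA]; right; exists A.
move=> noI noK; case: bad; split=> A cardA; apply/negP => hA.
  by case/existsP: noK; exists A; rewrite cardA eqxx.
by case/existsP: noI; exists A; rewrite cardA eqxx.
Qed.

Definition compl_rel e : rel T := fun x y => (x != y) && ~~ e x y.

Lemma simple_compl e : simple_graph e -> simple_graph (compl_rel e).
Proof. by move=> [sym _]; split=> [x y|x]; rewrite /compl_rel ?eqxx // eq_sym sym. Qed.

Lemma is_clique_compl e A :
  irreflexive e -> is_clique (compl_rel e) A = is_indep e A.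
Proof.
move=> irr; apply/cliqueP/indepP => clA x y xA yA.
  by case: (eqVneq x y) => [->|xy]; [rewrite irr | case/andP: (clA x y xA yA xy)].
by move=> xy; rewrite /compl_rel xy clA.
Qed.

Lemma is_indep_compl e A : is_indep (compl_rel e) A = is_clique e A.
Proof.
apply/indepP/cliqueP => clA x y xA yA.
  by move=> xy; move: (clA x y xA yA); rewrite /compl_rel xy negbK.
by rewrite /compl_rel negb_and !negbK; case: eqVneq => //= xy; apply: clA.
Qed.

Lemma rgood_compl e s t :
  irreflexive e -> rgood (compl_rel e) t s <-> rgood e s t.
Proof.
move=> irr; rewrite /rgood.
split=> -[noK noI]; split=> A cardA.
- by rewrite -is_indep_compl; apply: noI.
- by rewrite -is_clique_compl //; apply: noK.
- by rewrite is_clique_compl //; apply: noI.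
- by rewrite is_indep_compl; apply: noK.
Qed.

Lemma compl_add_edge e u v :
  compl_rel (add_edge e u v) =2 del_edge (compl_rel e) u v.
Proof. by move=> x y; rewrite /compl_rel /add_edge /del_edge -orbA negb_or andbA. Qed.

Lemma compl_del_edge e u v : u != v ->
  compl_rel (del_edge e u v) =2 add_edge (compl_rel e) u v.
Proof.
move=> uv x y; rewrite /compl_rel /del_edge /add_edge negb_and negbK -orbA.
case: (boolP ((x == u) && (y == v) || (x == v) && (y == u))); last by rewrite !orbF.
by case/orP => /andP [/eqP-> /eqP->]; rewrite !orbT andbT // eq_sym.
Qed.

Lemma irreflexive_add_edge e u v : irreflexive e -> u != v ->
  irreflexive (add_edge e u v).
Proof.
move=> irr uv x; rewrite /add_edge irr /=.
by apply/negP => /orP [] /andP [/eqP-> /eqP eq_uv]; rewrite eq_uv eqxx in uv.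
Qed.

Lemma irreflexive_del_edge e u v : irreflexive e -> irreflexive (del_edge e u v).
Proof. by move=> irr x; rewrite /del_edge irr. Qed.

Lemma doubly_saturated_compl e s t : simple_graph e ->
  doubly_saturated e s t -> doubly_saturated (compl_rel e) t s.
Proof.
move=> [sym irr] [good sat_add sat_del [ncomplete nedgeless]]; split.
- by apply/rgood_compl.
- move=> u v uv; rewrite /compl_rel uv negbK => euv.
  rewrite -(eq_rgood _ _ (compl_del_edge e uv)) rgood_compl.
    exact: sat_del.
  exact: irreflexive_del_edge.
- move=> u v /andP [uv neuv].
  rewrite -(eq_rgood _ _ (compl_add_edge e u v)) rgood_compl.
    exact: sat_add.
  exact: irreflexive_add_edge.
split=> [complete | edgeless].
  apply: nedgeless => x y; case: (eqVneq x y) => [->|xy]; first by rewrite irr.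
  by case/andP: (complete x y xy).
by apply: ncomplete => x y xy; move: (edgeless x y); rewrite /compl_rel xy negbK.
Qed.

Lemma add_edgeC e u v : add_edge e u v =2 add_edge e v u.
Proof. by move=> x y; rewrite /add_edge -!orbA (orbC (_ && _)). Qed.

Lemma add_edge_clique_mem e u v A :
  is_clique (add_edge e u v) A -> ~~ is_clique e A -> u \in A.
Proof.
move=> /cliqueP clA; apply: contraR => uA; apply/cliqueP => x y xA yA xy.
have [xu yu] : x != u /\ y != u by split; apply: contraNneq uA => <-.
move: (clA x y xA yA xy).
by rewrite /add_edge (negbTE xu) (negbTE yu) /= andbF !orbF.
Qed.

Lemma add_edge_clique_common_nbhd e s t u v : rgood e s t -> u != v ->
  ~ rgood (add_edge e u v) s t ->
  exists2 C : {set T}, #|C| = s - 2 &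
    C \subset [set y | e u y && e v y] /\ is_clique e C.
Proof.
move=> [noK noI] uv /not_rgood [[A cardA clA] | [A cardA inA]]; last first.
  case/negP: (noI A cardA); apply/indepP => x y xA yA.
  by apply: contra (indepP _ _ inA x y xA yA); rewrite /add_edge => ->.
have uA := add_edge_clique_mem clA (noK A cardA).
have vA : v \in A.
  apply: (@add_edge_clique_mem e v u); last exact: noK.
  by rewrite -(eq_is_clique (add_edgeC e u v)).
have off_uv x y : y != u -> y != v -> add_edge e u v x y = e x y.
  by rewrite /add_edge => /negbTE-> /negbTE->; rewrite !andbF !orbF.
exists (A :\: [set u; v]).
  by rewrite cardsDS ?subUset ?sub1set ?uA ?vA // cards2 uv cardA.
split.
  apply/subsetP => y; rewrite !inE negb_or => /andP [/andP [yu yv] yA].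
  rewrite -!(off_uv _ y) //.
  by apply/andP; split; apply: (cliqueP _ _ clA); rewrite // eq_sym.
apply/cliqueP => x y; rewrite !inE !negb_or => /andP [_ xA].
move=> /andP [/andP [yu yv] yA] xy.
by rewrite -off_uv //; apply: (cliqueP _ _ clA).
Qed.

Lemma common_nonnbr e s t u v : 3 <= t -> simple_graph e ->
  doubly_saturated e s t -> e u v -> exists w, [/\ w != u, ~~ e u w & ~~ e v w].
Proof.
move=> t3 [sym irr] ds euv.
have uv : u != v by apply: contraTneq euv => ->; rewrite irr.
have [good' sat_add' _ _] := doubly_saturated_compl (conj sym irr) ds.
have ncuv : ~~ compl_rel e u v by rewrite /compl_rel euv andbF.
have [C cardC [/subsetP sC _]] :=
  add_edge_clique_common_nbhd good' uv (sat_add' u v uv ncuv).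
have [w wC] : exists w, w \in C by apply/card_gt0P; rewrite cardC; lia.
have := sC w wC; rewrite inE /compl_rel => /andP [/andP [uw euw] /andP [_ evw]].
by exists w; rewrite eq_sym.
Qed.

Section Hajnal.
Variables (r : rel T) (W : {set T}) (k : nat).
Hypothesis clique_le : forall X, X \subset W -> is_clique r X -> #|X| <= k.

Definition max_clique C := [&& C \subset W, is_clique r C & #|C| == k].

Lemma cardsUI_exchange C U I : I \subset U -> #|I :|: (C :&: U)| <= #|C| ->
  #|U| + #|I| <= #|C :|: U| + #|C :&: I|.
Proof.
move=> sIU leX.
have capI : I :&: (C :&: U) = C :&: I.
  by rewrite setIA [I :&: C]setIC -setIA (setIidPl sIU).
have := cardsUI C U; have := cardsUI I (C :&: U); rewrite capI; lia.
Qed.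

Lemma hajnal_bigcup_bigcap (Cs : seq {set T}) :
  Cs != [::] -> all max_clique Cs ->
  2 * k <= #|\bigcup_(C <- Cs) C| + #|\bigcap_(C <- Cs) C|.
Proof.
elim: Cs => // C [|D Cs] IH _ /andP [maxC maxCs].
  by rewrite !big_seq1; case/and3P: maxC => _ _ /eqP->; lia.
rewrite big_cons [\bigcap_(_ <- C :: _) _]big_cons.
apply: leq_trans (IH isT maxCs) _.
have sID : \bigcap_(E <- D :: Cs) E \subset D by rewrite big_cons subsetIl.
have sDU : D \subset \bigcup_(E <- D :: Cs) E by rewrite big_cons subsetUl.
have allE : all max_clique [:: C, D & Cs] by rewrite /= maxC.
set U := \bigcup_(_ <- _) _ in sDU *; set I := \bigcap_(_ <- _) _ in sID *.
have DCs : D \in D :: Cs := mem_head _ _.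
have inI x : x \in I -> {in D :: Cs, forall E, x \in E}.
  by rewrite /I bigcap_seq => /bigcapP.
have inU y : y \in U -> exists2 E, E \in D :: Cs & y \in E.
  by rewrite /U bigcup_seq => /bigcupP.
have clE E x y : E \in [:: C, D & Cs] -> x \in E -> y \in E -> x != y -> r x y.
  by move=> /(allP allE) /and3P [_ /cliqueP clE _]; apply: clE.
have DE : D \in [:: C, D & Cs] by rewrite inE mem_head orbT.
have /and3P [sCW _ /eqP cardC] := maxC.
have /and3P [sDW _ _] := allP allE D DE.
apply: cardsUI_exchange; first exact: subset_trans sID sDU.
rewrite cardC; apply: clique_le.
  by rewrite subUset (subset_trans sID sDW) (subset_trans (subsetIl _ _) sCW).
(* Any two vertices of I :|: (C :&: U) lie in a common member of the family. *)
apply/cliqueP => x y; rewrite !inE.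
case/orP => [xI | /andP [xC xU]]; case/orP => [yI | /andP [yC yU]].
- by apply: (clE D); [|exact: inI xI _ DCs|exact: inI yI _ DCs].
- have [E ECs yE] := inU y yU.
  by apply: (clE E); [rewrite inE ECs orbT|exact: inI xI _ ECs|].
- have [E ECs xE] := inU x xU.
  by apply: (clE E); [rewrite inE ECs orbT| |exact: inI yI _ ECs].
- exact: (clE C) (mem_head _ _) xC yC.
Qed.

Lemma hajnal_card C0 : max_clique C0 ->
  {in W, forall x, exists2 C : {set T}, max_clique C & x \notin C} ->
  2 * k <= #|W|.
Proof.
move=> maxC0 avoid; pose Cs := enum [set C | max_clique C].
have memCs C : (C \in Cs) = max_clique C by rewrite mem_enum inE.
have C0Cs : C0 \in Cs by rewrite memCs.
have capCs : \bigcap_(C <- Cs) C = set0.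
  apply/setP => x; rewrite inE bigcap_seq; apply/bigcapP => inCs.
  have /and3P [sC0W _ _] := maxC0.
  have [C maxC] := avoid x (subsetP sC0W x (inCs C0 C0Cs)).
  by rewrite inCs ?memCs.
have cupCs : \bigcup_(C <- Cs) C \subset W.
  by rewrite bigcup_seq; apply/bigcupsP => C; rewrite memCs => /and3P [].
have := @hajnal_bigcup_bigcap Cs; rewrite capCs cards0 addn0.
move/(_ _ _)/leq_trans; apply; last exact: subset_leq_card.
- by apply: contraTneq C0Cs => ->.
- by apply/allP => C; rewrite memCs.
Qed.
End Hajnal.

Lemma nbhd_card e s t v : 3 <= t -> simple_graph e -> doubly_saturated e s t ->
  (exists2 u, u != v & ~~ e v u) -> 2 * (s - 2) <= #|[set y | e v y]|.
Proof.
move=> t3 [sym irr] ds [u uv nvu]; have [good sat_add _ _] := ds.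
set N := [set y | e v y].
have nbhd_clique w : w != v -> ~~ e v w ->
    exists2 C, max_clique e N (s - 2) C & C \subset [set y | e w y].
  rewrite eq_sym => vw nvw.
  have [C cardC [/subsetP sC clC]] :=
    add_edge_clique_common_nbhd good vw (sat_add v w vw nvw).
  exists C; last by apply/subsetP => y /sC; rewrite !inE => /andP [].
  rewrite /max_clique clC cardC eqxx !andbT.
  by apply/subsetP => y /sC; rewrite !inE => /andP [].
have [C0 maxC0 _] := nbhd_clique u uv nvu.
apply: (@hajnal_card e N (s - 2) _ C0 maxC0).
- move=> X /subsetP sXN clX.
  have vX : v \notin X by apply/negP => /sXN; rewrite inE irr.
  have vXe : {in X, forall y, e v y} by move=> y /sXN; rewrite inE.
  have := rgood_clique_lt good (clique_setU1 sym vXe clX).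
  by rewrite cardsU1 vX; lia.
move=> x; rewrite inE => evx.
have [b [bv nvb nxb]] := common_nonnbr t3 (conj sym irr) ds evx.
have [C maxC /subsetP sC] := nbhd_clique b bv nvb.
by exists C => //; apply: contraNN nxb => /sC; rewrite inE sym.
Qed.

Lemma mixed_vertex e : symmetric e -> ~ is_complete e -> ~ is_edgeless e ->
  exists v, (exists2 u, u != v & ~~ e v u) /\ (exists w, e v w).
Proof.
move=> sym ncomplete nedgeless.
have [x [y xy nexy]] : exists x, exists2 y, x != y & ~~ e x y.
  case: (boolP [exists x, exists y, (x != y) && ~~ e x y]).
    by case/existsP => x /existsP [y /andP [xy nexy]]; exists x, y.
  rewrite negb_exists => /forallP nonadj; case: ncomplete => x y xy.
  by move: (nonadj x); rewrite negb_exists => /forallP /(_ y); rewrite xy negbK.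
have [a [b eab]] : exists a b, e a b.
  case: (boolP [exists a, exists b, e a b]) => [/existsP [a /existsP [b eab]]|].
    by exists a, b.
  rewrite negb_exists => /forallP noedge; case: nedgeless => a b.
  by move: (noedge a); rewrite negb_exists => /forallP /(_ b).
case: (boolP [exists z, e x z]) => [/existsP [z exz]|].
  by exists x; split; [exists y; rewrite // eq_sym | exists z].
rewrite negb_exists => /forallP nex; exists a; split; last by exists b.
exists x; last by rewrite sym.
by apply: contraTneq eab => <-; rewrite nex.
Qed.

Lemma card_nbhd_compl e v : irreflexive e ->
  #|[set y | e v y]| + #|[set y | compl_rel e v y]| < #|T|.
Proof.
move=> irr; set N := [set y | e v y]; set M := [set y | compl_rel e v y].
have NM0 : N :&: M = set0.
  by apply/setP => y; rewrite !inE /compl_rel; case: (e v y); rewrite ?andbF.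
have vNM : v \notin N :|: M by rewrite !inE /compl_rel irr eqxx.
have := cardsUI N M; have := max_card (v |: (N :|: M)).
by rewrite NM0 cards0 cardsU1 vNM; lia.
Qed.
End DoublySaturated.

Theorem mainTheorem4 (T : finType) (e : rel T) (s t : nat) :
  3 <= s -> 3 <= t -> simple_graph e -> doubly_saturated e s t ->
  2 * s + 2 * t - 7 <= #|T|.
Proof.
move=> s3 t3 simple ds; have [sym irr] := simple.
have [_ _ _ [ncomplete nedgeless]] := ds.
have [v [nonadj [w evw]]] := mixed_vertex sym ncomplete nedgeless.
have nbhdN := nbhd_card t3 simple ds nonadj.
have nonadj_compl : exists2 u, u != v & ~~ compl_rel e v u.
  exists w; last by rewrite /compl_rel evw andbF.
  by apply: contraTneq evw => ->; rewrite irr.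
have nbhdM := nbhd_card s3 (simple_compl simple)
  (doubly_saturated_compl simple ds) nonadj_compl.
have := card_nbhd_compl v irr; lia.
Qed.
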